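(* Consider an instance with $n$ agents, $m$ indivisible items and binary additive valuations, and fix a stable allocation $\chi$ with profile $(h_1,\dots,h_n)$ (notation as in the context). Define $p_d,q_d,r_d,s_d$ as follows, for integers $d\ge0$: $p_d=\{i: h_i=d \text{ and } \chi \text{ admits a transfer } i\to j \text{ for some } j \text{ with } h_j=d-1\}$, $q_d=\{i: h_i=d \text{ and } \chi \text{ admits a transfer } k\to i \text{ for some } k \text{ with } h_k=d+1\}$, $r_d=\{i:h_i=d,\ i\notin p_d\cup q_d\}$, $s_d=p_d\cup q_{d-1}$ (with $q_{-1}=\emptyset$). Then $\mathsf{layer}_d=r_d$ and $\mathsf{layer}^-_d=s_d$ for every $d$.
   Context: Agents $[n]$, items $[m]$. Each agent $i$ has a set $L_i\subseteq[m]$ of liked items and valuation $v_i(S)=|S\cap L_i|$. An allocation $\chi=(\chi_1,\dots,\chi_n)$ is a tuple of pairwise disjoint subsets of $[m]$; it is clean if $\chi_i\subseteq L_i$ for all $i$, and max-USW if it maximizes $\sum_i v_i(\chi_i)$. Throughout, ''allocation'' means a clean max-USW allocation. Profile: $(h_1,\dots,h_n)$, $h_i=|\chi_i|$. Given $\chi$, form a directed graph on $[n]$ with an arc $(i,i')$, $i\ne i'$, whenever some $o\in\chi_i$ has $o\in L_{i'}$; $\chi$ admits a transfer $u\to v$ if there is a simple directed path from $u$ to $v$ with at least one arc. A transfer is narrowing if $h_u\ge h_v+2$; $\chi$ is stable if it admits no narrowing transfer. For an integer $d\ge0$, $\mathsf{layer}_d$ is the set of agents $i$ with $|\chi'_i|=d$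 for every stable allocation $\chi'$; for an integer $d\ge1$, $\mathsf{layer}^-_d$ is the set of agents $i$ such that $\{|\chi'_i|:\chi' \text{ stable}\}=\{d-1,d\}$. *)

From mathcomp Require Import all_boot.
Set Implicit Arguments. Unset Strict Implicit. Unset Printing Implicit Defensive.

Section Fair.
Variables (n m : nat) (L : 'I_n -> {set 'I_m}).

Definition alloc := {ffun 'I_n -> {set 'I_m}}.

Definition is_alloc (c : alloc) : Prop :=
  forall i j : 'I_n, i != j -> [disjoint c i & c j].

Definition clean (c : alloc) : Prop := forall i, c i \subset L i.

(* utilitarian social welfare: v_i(S) = |S \cap L_i| *)
Definition usw (c : alloc) : nat := \sum_(i < n) #|c i :&: L i|.

Definition max_usw (c : alloc) : Prop :=
  is_alloc c /\ forall c' : alloc, is_alloc c' -> usw c' <= usw c.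

(* "allocation" = clean max-USW allocation *)
Definition good (c : alloc) : Prop := clean c /\ max_usw c.

Definition arc (c : alloc) : rel 'I_n :=
  fun i i' => (i != i') && [exists o, (o \in c i) && (o \in L i')].

Definition transfer (c : alloc) (u v : 'I_n) : Prop :=
  exists p : seq 'I_n,
    [/\ p != [::], path (arc c) u p, last u p = v & uniq (u :: p)].

Definition stable (c : alloc) : Prop :=
  good c /\ ~ (exists u v, #|c v| + 2 <= #|c u| /\ transfer c u v).

Definition layer (d : nat) (i : 'I_n) : Prop :=
  forall c, stable c -> #|c i| = d.

(* {|c i| : c stable} = {d-1, d}, for d >= 1 *)
Definition layerm (d : nat) (i : 'I_n) : Prop :=
  forall k, (exists c, stable c /\ #|c i| = k) <-> (k = d.-1 \/ k = d).

Definition pset (c : alloc) (d : nat) (i : 'I_n) : Prop :=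
  #|c i| = d /\ exists j, #|c j| + 1 = d /\ transfer c i j.
Definition qset (c : alloc) (d : nat) (i : 'I_n) : Prop :=
  #|c i| = d /\ exists k, #|c k| = d + 1 /\ transfer c k i.
Definition rset (c : alloc) (d : nat) (i : 'I_n) : Prop :=
  #|c i| = d /\ ~ pset c d i /\ ~ qset c d i.
(* s_d = p_d ∪ q_{d-1}, with q_{-1} = ∅ *)
Definition sset (c : alloc) (d : nat) (i : 'I_n) : Prop :=
  pset c d i \/ (0 < d /\ qset c d.-1 i).

End Fair.

(* Executing a transfer u -> v, i.e. moving one item along each arc of the
   path, yields another clean max-USW allocation in which u has one item less
   and v one more.  If two clean max-USW allocations c, c' give an agent a fewer
   items in c' than in c, chasing the items of a alternately through c and c'
   leads to an agent b with more items in c' than in c, together with a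
   transfer a -> b in c and a transfer b -> a in c'.  Hence the stable
   allocations are exactly the clean max-USW allocations minimising the sum of
   the squared bundle sizes, and from one stable allocation to another each
   bundle size changes by at most one; by the same transfers, the size h_i of
   agent i drops in some stable allocation iff i is in p_(h_i), rises iff i is
   in q_(h_i), and not both. *)

From Pilot Require Import Defs.
From mathcomp Require Import all_boot zify.
Set Implicit Arguments. Unset Strict Implicit. Unset Printing Implicit Defensive.

Lemma ltn_sum (I : finType) (P : pred I) (f g : I -> nat) (i0 : I) :
  (forall i, P i -> f i <= g i) -> P i0 -> f i0 < g i0 ->
  \sum_(i | P i) f i < \sum_(i | P i) g i.
Proof.
move=> le_fg Pi0 lt0; rewrite (bigD1 i0) //= [X in _ < X](bigD1 i0) //=.
by rewrite -addSn leq_add // leq_sum // => i /andP[/le_fg].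
Qed.

Section Transfers.
Variables (n m : nat) (L : 'I_n -> {set 'I_m}).
Implicit Types (c : alloc n m) (a b u v x y : 'I_n).

Lemma is_allocP c :
  is_alloc c <-> (forall o x y, o \in c x -> o \in c y -> x = y).
Proof.
split=> [ac o x y ox oy | uniq_owner x y].
  by apply/eqP; apply: contraTT isT => /ac/disjointFr/(_ ox); rewrite oy.
apply: contraNT => /pred0Pn[o /andP[ox oy]].
by rewrite (uniq_owner o x y ox oy).
Qed.

Lemma card_bigcup_alloc c (P : pred 'I_n) : is_alloc c ->
  #|\bigcup_(x | P x) c x| = \sum_(x | P x) #|c x|.
Proof.
move=> ac; pose F x := if P x then c x else set0.
have disjF x y : x != y -> [disjoint F x & F y].
  rewrite /F; case: (P x); case: (P y) => // xy; rewrite ?ac //;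
  by rewrite -setI_eq0 ?set0I ?setI0.
rewrite big_mkcond /= -/F -sum1_card partition_disjoint_bigcup //.
rewrite [RHS]big_mkcond; apply: eq_bigr => x _.
by rewrite sum1_card; case: (P x); rewrite ?cards0.
Qed.

Lemma usw_clean c : clean L c -> usw L c = \sum_x #|c x|.
Proof. by move=> cc; apply: eq_bigr => x _; rewrite (setIidPl (cc x)). Qed.

Lemma good_of_sum c c' : good L c -> is_alloc c' -> clean L c' ->
  \sum_x #|c' x| = \sum_x #|c x| -> good L c'.
Proof.
move=> [cc [ac maxc]] ac' cc' eq_sum; split=> //; split=> // c'' ac''.
by rewrite (usw_clean cc') eq_sum -(usw_clean cc); apply: maxc.
Qed.

Lemma liked_allocated c o x : good L c -> o \in L x -> exists y, o \in c y.
Proof.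
move=> [cc [ac maxc]] oLx; apply/existsP; apply: contraT => /existsPn o_free.
pose c' : alloc n m := [ffun y => if y == x then o |: c x else c y].
have ac' : is_alloc c'.
  apply/is_allocP => o' y z; rewrite !ffunE.
  have uniq_owner := proj1 (is_allocP c) ac.
  case: eqP => [-> | _]; case: eqP => [-> | _] //; rewrite ?inE.
  - case/predU1P => [-> oz | o'x o'z]; last exact: uniq_owner o'x o'z.
    by case/negP: (o_free z).
  - move=> o'y /predU1P[eo | o'x]; last exact: uniq_owner o'y o'x.
    by case/negP: (o_free y); rewrite -eo.
  - exact: uniq_owner.
have cc' : clean L c'.
  move=> y; rewrite ffunE; case: eqP => [-> | _]; last exact: cc.
  by rewrite subUset sub1set oLx cc.
have := maxc c' ac'; rewrite (usw_clean cc) (usw_clean cc') leqNgt.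
rewrite (bigD1 x) //= [X in _ < X](bigD1 x) //= ffunE eqxx cardsU1 (negbTE (o_free x)).
suff -> : \sum_(y < n | y != x) #|c' y| = \sum_(y < n | y != x) #|c y|.
  by rewrite add1n ltnS leqnn.
by apply: eq_bigr => y /negbTE yx; rewrite ffunE yx.
Qed.

(* As far as bundle sizes go, [c'] arises from [c] by moving one item from [u]
   to [v]; when [u = v] the sizes are unchanged. *)
Definition shift c c' u v : Prop :=
  forall x, #|c' x| + (x == u) = #|c x| + (x == v).

Lemma shift_trans c1 c2 c3 u v w :
  shift c1 c2 u v -> shift c2 c3 v w -> shift c1 c3 u w.
Proof.
move=> s12 s23 x; have := s12 x; have := s23 x.
by case: (x == u); case: (x == v); case: (x == w) => /=; lia.
Qed.

Lemma sum_indicator x0 : \sum_x (x == x0 : nat) = 1.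
Proof. by rewrite (bigD1 x0) //= eqxx big1 // => x /negbTE ->. Qed.

Lemma shift_sum c c' u v : shift c c' u v -> \sum_x #|c' x| = \sum_x #|c x|.
Proof.
move=> s; have : \sum_x (#|c' x| + (x == u)) = \sum_x (#|c x| + (x == v)).
  by apply: eq_bigr => x _; apply: s.
by rewrite !big_split /= !sum_indicator => /addIn.
Qed.

Lemma move_item c u v o : good L c -> o \in c u -> o \in L v -> u != v ->
  exists c', [/\ good L c', shift c c' u v & forall x, x != u -> c x \subset c' x].
Proof.
move=> gc ou oLv uv; have [cc [ac _]] := gc.
have uniq_owner := proj1 (is_allocP c) ac.
pose c' : alloc n m :=
  [ffun x => if x == u then c u :\ o else if x == v then o |: c v else c x].
have mem_c' o' x : (o' \in c' x) = (if o' == o then x == v else o' \in c x).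
  rewrite ffunE; case: (eqVneq x u) => [-> | xu].
    by rewrite (negbTE uv) !inE; case: eqP.
  case: (eqVneq x v) => [-> | xv]; rewrite ?inE; first by case: eqP.
  case: eqP => // ->; apply/negP => ox.
  by case/eqP: xu; apply: uniq_owner ox ou.
have sh : shift c c' u v.
  move=> x; rewrite ffunE.
  have ov : o \notin c v by apply: contra uv => ov; rewrite (uniq_owner o u v).
  case: (eqVneq x u) => [-> | xu]; first by rewrite (negbTE uv) (cardsD1 o (c u)) ou; lia.
  by case: (eqVneq x v) => [-> | //]; rewrite cardsU1 ov; lia.
exists c'; split=> //.
- apply: good_of_sum gc _ _ (shift_sum sh).
  + apply/is_allocP => o' x y; rewrite !mem_c'.
    by case: eqP => _; [move=> /eqP -> /eqP -> | exact: uniq_owner].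
  + move=> x; apply/subsetP => o'; rewrite mem_c'.
    by case: eqP => [-> /eqP -> // | _]; apply/subsetP.
- move=> x xu; apply/subsetP => o' o'x; rewrite mem_c'.
  case: eqP o'x => // -> ox.
  by case/eqP: xu; apply: uniq_owner ox ou.
Qed.

Lemma arc_subset c c' x y : c x \subset c' x -> Defs.arc L c x y -> Defs.arc L c' x y.
Proof.
move=> sub /andP[xy /existsP[o /andP[ox oLy]]].
by rewrite /Defs.arc xy; apply/existsP; exists o; rewrite (subsetP sub).
Qed.

Lemma exec_path c u p : good L c -> path (Defs.arc L c) u p -> uniq (u :: p) ->
  exists c', good L c' /\ shift c c' u (last u p).
Proof.
elim: p c u => [|v p IH] c u gc /=; first by exists c.
case/andP=> /andP[uv /existsP[o /andP[ou oLv]]] pv /andP[up uniq_vp].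
have [c1 [gc1 sh1 grow]] := move_item gc ou oLv uv.
have pv1 : path (Defs.arc L c1) v p.
  apply: (sub_in_path (P := predC1 u)) pv => [x y /= xu _ | ].
    exact/arc_subset/grow.
  by apply/allP => x /= xp; apply: contraNneq up => <-.
have [c2 [gc2 sh2]] := IH c1 v gc1 pv1 uniq_vp.
by exists c2; split=> //; apply: shift_trans sh1 sh2.
Qed.

Lemma exec_transfer c u v : good L c -> transfer L c u v ->
  exists c', good L c' /\ shift c c' u v.
Proof. by move=> gc [p [_ pu <- uniq_p]]; apply: exec_path. Qed.

Definition exchange c c' : rel 'I_n :=
  fun x y => (x != y) && [exists o, (o \in c x) && (o \in c' y)].

Lemma connect_transfer (e : rel 'I_n) c a b :
  subrel e (Defs.arc L c) -> connect e a b -> a != b -> transfer L c a b.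
Proof.
move=> sub /connectP[p pe ->]; case: (shortenP pe) => p' pe' uniq_p' _ ab.
exists p'; split=> //; last exact: sub_path pe'.
by apply: contraNneq ab => ->.
Qed.

(* In [c'], the items of the agents reachable from [a] stay with reachable
   agents, so the deficit of [a] is balanced by a reachable surplus. *)
Lemma exchange_surplus c c' a : good L c -> good L c' -> #|c' a| < #|c a| ->
  exists2 b, connect (exchange c c') a b & #|c b| < #|c' b|.
Proof.
move=> gc gc' lt_a; have [cc [ac _]] := gc; have [cc' [ac' _]] := gc'.
set R := connect (exchange c c') a.
apply/exists_inP; apply: contraT => /exists_inPn no_surplus.
have sub : \bigcup_(y | R y) c y \subset \bigcup_(y | R y) c' y.
  apply/subsetP => o /bigcupP[y Ry oy].
  have [z oz] := liked_allocated gc' (subsetP (cc y) o oy).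
  apply/bigcupP; exists z => //; apply: connect_trans Ry _.
  have [<- | yz] := eqVneq y z; first exact: connect0.
  by apply/connect1; rewrite /exchange yz; apply/existsP; exists o; rewrite oy.
have := subset_leq_card sub; rewrite !card_bigcup_alloc // leqNgt => /negP[].
apply: (ltn_sum (i0 := a)) => // [y Ry | ]; first by rewrite leqNgt no_surplus.
exact: connect0.
Qed.

Lemma transfer_flow c c' a : good L c -> good L c' -> #|c' a| < #|c a| ->
  exists b, [/\ #|c b| < #|c' b|, transfer L c a b & transfer L c' b a].
Proof.
move=> gc gc' lt_a; have [b ab lt_b] := exchange_surplus gc gc' lt_a.
have neq_ab : a != b by apply: contraTneq lt_b => <-; rewrite -leqNgt ltnW.
exists b; split=> //.
- apply: connect_transfer ab neq_ab => x y /andP[xy /existsP[o /andP[ox oy]]].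
  by rewrite /Defs.arc xy; apply/existsP; exists o; rewrite ox (subsetP (gc'.1 y)).
- apply: (connect_transfer (e := [rel x y | exchange c c' y x])).
  + move=> x y /andP[yx /existsP[o /andP[oy ox]]].
    rewrite /Defs.arc eq_sym yx; apply/existsP; exists o.
    by rewrite ox (subsetP (gc.1 y)).
  + by rewrite connect_rev.
  + by rewrite eq_sym.
Qed.

Definition potential c := \sum_x #|c x| ^ 2.

Lemma shift_potential c c' u v : u != v -> shift c c' u v ->
  potential c' + 2 * #|c u| = potential c + 2 * #|c v| + 2.
Proof.
move=> uv sh; have vu : v != u by rewrite eq_sym.
rewrite /potential (bigD1 u) // (bigD1 v) ?vu //=.
rewrite [\sum_x #|c x| ^ 2](bigD1 u) // (bigD1 v) ?vu //=.
have -> : \sum_(x | (x != u) && (x != v)) #|c' x| ^ 2 =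
          \sum_(x | (x != u) && (x != v)) #|c x| ^ 2.
  apply: eq_bigr => x /andP[/negbTE xu /negbTE xv].
  by have := sh x; rewrite xu xv !addn0 => ->.
have := sh u; have := sh v; rewrite !eqxx (negbTE uv) (negbTE vu) /=; nia.
Qed.

Definition excess c c' := \sum_x (#|c' x| - #|c x|).

Lemma stable_transfer_le c u v : stable L c -> transfer L c u v -> #|c u| <= #|c v| + 1.
Proof.
move=> [_ no_narrow] tr; rewrite leqNgt; apply/negP => lt.
by apply: no_narrow; exists u, v; split=> //; lia.
Qed.

Lemma excess_shift c c' c'' a b : shift c' c'' b a ->
  #|c' a| < #|c a| -> #|c b| < #|c' b| -> excess c c'' < excess c c'.
Proof.
move=> sh lt_a lt_b; have ba : b != a by apply: contraTneq lt_b => ->; lia.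
have le_pt y : #|c'' y| - #|c y| <= #|c' y| - #|c y|.
  have := sh y; have [-> | _] := eqVneq y a; first by rewrite eq_sym (negbTE ba); lia.
  by case: (y == b) => /=; lia.
have lt_b' : #|c'' b| - #|c b| < #|c' b| - #|c b|.
  by have := sh b; rewrite eqxx (negbTE ba); lia.
exact: ltn_sum (fun y _ => le_pt y) isT lt_b'.
Qed.

(* Induction on the excess of [c'] over [c]: by stability of [c], the transfer
   in [c'] given by [transfer_flow] does not increase [potential] and lowers
   the excess. *)
Lemma stable_potential_le c c' : stable L c -> good L c' -> potential c <= potential c'.
Proof.
move=> st gc'; have [gc _] := st.
have [k] := ubnP (excess c c'); elim: k c' gc' => // k IH c' gc' lt_k.
case: (boolP [exists a, #|c' a| < #|c a|]) => [/existsP[a lt_a] | /existsPn le_c];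
  last first.
  by apply: leq_sum => x _; rewrite leq_sqr leqNgt le_c.
have [b [lt_b tr_ab tr'_ba]] := transfer_flow gc gc' lt_a.
have le_ab := stable_transfer_le st tr_ab.
have [c'' [gc'' sh]] := exec_transfer gc' tr'_ba.
have ba : b != a by apply: contraTneq lt_b => ->; lia.
have le_pot : potential c'' <= potential c' by have := shift_potential ba sh; lia.
have lt_excess := excess_shift sh lt_a lt_b.
exact: leq_trans (IH c'' gc'' (leq_trans lt_excess (ltnSE lt_k))) le_pot.
Qed.

Lemma stableP c :
  stable L c <-> good L c /\ forall c', good L c' -> potential c <= potential c'.
Proof.
split=> [st | [gc min_pot]].
  by split=> [|c']; [case: st | apply: stable_potential_le].
split=> // -[u [v [le_vu tr]]].
have [c' [gc' sh]] := exec_transfer gc tr.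
have uv : u != v by apply: contraTneq le_vu => ->; lia.
by have := shift_potential uv sh; have := min_pot c' gc'; lia.
Qed.

Lemma stable_exec_transfer c u v :
  stable L c -> transfer L c u v -> #|c v| + 1 = #|c u| ->
  exists c', [/\ stable L c', #|c' u| + 1 = #|c u| & #|c' v| = #|c v| + 1].
Proof.
move=> st tr e; have [gc _] := st.
have [c' [gc' sh]] := exec_transfer gc tr.
have uv : u != v by apply: contraPneq e => ->; lia.
have := sh u; have := sh v; rewrite !eqxx (negbTE uv) eq_sym (negbTE uv) /= => sv su.
exists c'; split; [apply/stableP; split=> // c'' gc'' | lia | lia].
by have := shift_potential uv sh; have := stable_potential_le st gc''; lia.
Qed.

Lemma stable_card_lt c c' a : stable L c -> stable L c' -> #|c' a| < #|c a| ->
  [/\ #|c' a| + 1 = #|c a|, pset L c #|c a| a & qset L c' #|c' a| a].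
Proof.
move=> st st' lt_a.
have [b [lt_b tr_ab tr'_ba]] := transfer_flow st.1 st'.1 lt_a.
have := stable_transfer_le st tr_ab; have := stable_transfer_le st' tr'_ba => le' le.
by split; [lia | split=> //; exists b; split=> //; lia ..].
Qed.

Lemma pset_stable c d i : stable L c -> pset L c d i ->
  exists c', stable L c' /\ #|c' i| + 1 = d.
Proof.
move=> st [ci [j [cj tr]]].
have [c' [st' ci' _]] := stable_exec_transfer st tr (etrans cj (esym ci)).
by exists c'; rewrite ci' ci.
Qed.

Lemma qset_stable c d i : stable L c -> qset L c d i ->
  exists c', stable L c' /\ #|c' i| = d + 1.
Proof.
move=> st [ci [k [ck tr]]].
have e : #|c i| + 1 = #|c k| by rewrite ci ck.
have [c' [st' _ ci']] := stable_exec_transfer st tr e.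
by exists c'; rewrite ci' ci.
Qed.
End Transfers.

Section Layers.
Variables (n m : nat) (L : 'I_n -> {set 'I_m}) (c : alloc n m) (i : 'I_n).
Hypothesis stc : stable L c.

Lemma stable_cardP k :
  (exists c', stable L c' /\ #|c' i| = k) <->
  [\/ k = #|c i|, k + 1 = #|c i| /\ pset L c #|c i| i
    | k = #|c i| + 1 /\ qset L c #|c i| i].
Proof.
split=> [[c' [st' <-]] | ].
  case: (ltngtP #|c' i| #|c i|) => [lt | gt | ->]; last by constructor 1.
  - by have [e p _] := stable_card_lt stc st' lt; constructor 2.
  - by have [e _ q] := stable_card_lt st' stc gt; constructor 3; split.
case=> [-> | [e p] | [e q]]; first by exists c.
- by have [c' [st' e']] := pset_stable stc p; exists c'; split=> //; lia.
- by have [c' [st' e']] := qset_stable stc q; exists c'; split=> //; lia.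
Qed.

Lemma pset_qset_disjoint d : pset L c d i -> ~ qset L c d i.
Proof.
move=> p q; have [c1 [st1 e1]] := pset_stable stc p.
have [c2 [st2 e2]] := qset_stable stc q.
have lt : #|c1 i| < #|c2 i| by lia.
by have [] := stable_card_lt st2 st1 lt; lia.
Qed.

Lemma layer_rset d : layer L d i <-> rset L c d i.
Proof.
split=> [lay | [ci [np nq]] c' st'].
  have ci := lay c stc; split=> //; split.
  - by move=> /(pset_stable stc)[c' [st' e]]; have := lay c' st'; lia.
  - by move=> /(qset_stable stc)[c' [st' e]]; have := lay c' st'; lia.
have : exists c'', stable L c'' /\ #|c'' i| = #|c' i| by exists c'.
by case/stable_cardP=> [-> // | [_ p] | [_ q]]; [case: np | case: nq]; rewrite -ci.
Qed.

Lemma layerm_sset d : 0 < d -> (layerm L d i <-> sset L c d i).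
Proof.
move=> d_gt0; split=> [lay | s k].
  have /lay[ci | ci] : exists c', stable L c' /\ #|c' i| = #|c i| by exists c.
  - right; split=> //; have /(lay d).2/stable_cardP : d = d.-1 \/ d = d by right.
    by case=> [| [] | [_ q]]; [lia | lia | rewrite -ci].
  - left; have /(lay d.-1).2/stable_cardP : d.-1 = d.-1 \/ d.-1 = d by left.
    by case=> [| [_ p] | []]; [lia | rewrite -ci | lia].
rewrite stable_cardP; case: s => [p | [_ q]].
  have ci := p.1; split=> [[-> | [] | [_ q]] | [] ->]; try lia.
  - by case: (pset_qset_disjoint p); rewrite -ci.
  - by constructor 2; split; [lia | rewrite ci].
  - by constructor 1.
have ci := q.1; split=> [[-> | [_ p] | []] | [] ->]; try lia.
- by case: (pset_qset_disjoint p); rewrite ci.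
- by constructor 1.
- by constructor 3; split; [lia | rewrite ci].
Qed.

End Layers.

Theorem lemma3 (n m : nat) (L : 'I_n -> {set 'I_m}) (c : alloc n m) :
  stable L c ->
  (forall (d : nat) (i : 'I_n), layer L d i <-> rset L c d i) /\
  (forall (d : nat) (i : 'I_n), 0 < d -> (layerm L d i <-> sset L c d i)).
Proof.
by move=> stc; split=> d i; [apply: layer_rset | apply: layerm_sset].
Qed.
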